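(* Let $1\le s<t$. One can assign to each word $w\in W$ a pair of rational numbers $(a_w,b_w)\in\mathbb{Q}_{>2}^2$, the corresponding linear map $\ell_w:x\mapsto a_wx+b_w$, and a value $r_w\in(s,t)$ such that: (i) for all $v,w\in W$, if $v\le_W w$ and $v\ne w$, then $a_v<a_w$ and $b_v<b_w$ (and thus in particular $\ell_v<\ell_w$ on $(s,t)$); (ii) for all $v,w\in W$, if $v\not\le_W w$, then $\ell_v(r_v)>\ell_w(r_v)$ (and in particular $\ell_v\not\le\ell_w$ pointwise on $(s,t)$).
   Context: $W=\{0,1\}^*$ is the set of finite binary words; $w\le_W w'$ iff $w'$ is a prefix (initial segment) of $w$. $\mathbb{Q}_{>2}$ denotes the rational numbers greater than $2$. *)

From Stdlib Require Import Reals QArith List.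
Open Scope R_scope.

Definition word := list bool.

Definition is_prefix (u v : word) : Prop := exists z, v = u ++ z.

Definition leW (w w' : word) : Prop := is_prefix w' w.

Definition linmap (a b : Q) (x : R) : R := Q2R a * x + Q2R b.

(* Pick rationals p < p + L inside (s, t).  Words index the nodes of a binary
   tree of nested subintervals of [p, p + L]: the node of depth n and centre c
   has its children at c +- radius n / 2, so every node below a child stays at
   distance at least radius n / 3 from c.  Reading a word letter by letter, add
   to its line one of two lines with positive rational coefficients that cross
   at c, namely the one that is lower on the side of the child taken.  Take r_w
   to be the centre of the node of w, and a_w, b_w to be 3 minus the
   coefficients of its line.  Extending a word strictly increases both
   coefficients, which gives (i) and the case of (ii) where w extends v.  If v
   and w first differ below the node of centre c, then at r_v the line added for
   v is lower by weight * |r_v - c|, and the weights decrease so fast that the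
   rest of v cannot make up for it, while the rest of w only adds. *)

From Stdlib Require Import Reals QArith Qreals List Lra Lqa.
Open Scope R_scope.

Lemma Q_dense_R (x y : R) : x < y -> exists q : Q, x < Q2R q < y.
Proof.
  intros Hxy.
  destruct (archimed (/ (y - x))) as [HN _].
  set (N := up (/ (y - x))) in HN.
  assert (HNx : 1 < IZR N * (y - x)).
  { apply (Rmult_lt_compat_r (y - x)) in HN; [|Lra.lra].
    rewrite Rinv_l in HN; Lra.lra. }
  assert (HN0 : (0 < N)%Z).
  { apply lt_IZR. assert (0 < / (y - x)) by (apply Rinv_0_lt_compat; Lra.lra). Lra.lra. }
  assert (HNR : 0 < IZR N) by (apply IZR_lt; exact HN0).
  destruct (archimed (x * IZR N)) as [Hk1 Hk2].
  set (k := up (x * IZR N)) in Hk1, Hk2.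
  exists (k # Z.to_pos N).
  unfold Q2R; simpl; rewrite Z2Pos.id by exact HN0.
  split; apply (Rmult_lt_reg_r (IZR N)); auto;
    rewrite Rmult_assoc, Rinv_l by Lra.lra; Lra.lra.
Qed.

Lemma not_leW_cases (v w : word) : ~ leW v w ->
  (exists b z, w = v ++ b :: z) \/
  (exists u b z1 z2, v = u ++ b :: z1 /\ w = u ++ negb b :: z2).
Proof.
  revert w; induction v as [|a v IH]; intros [|b w] Hvw.
  - exfalso; apply Hvw; exists nil; reflexivity.
  - left; exists b, w; reflexivity.
  - exfalso; apply Hvw; exists (a :: v); reflexivity.
  - destruct (Bool.bool_dec a b) as [<-|Hab].
    + assert (Hvw' : ~ leW v w).
      { intros [z Hz]; apply Hvw; exists z; simpl; congruence. }
      destruct (IH w Hvw') as [[c [z ->]]|[u [c [z1 [z2 [-> ->]]]]]].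
      * left; exists c, z; reflexivity.
      * right; exists (a :: u), c, z1, z2; split; reflexivity.
    + right; exists nil, a, v, w; split; [reflexivity|].
      destruct a, b; simpl; congruence.
Qed.

Lemma linmap_Q2R (a b x : Q) : linmap a b (Q2R x) = Q2R (a * x + b).
Proof. unfold linmap; rewrite Q2R_plus, Q2R_mult; reflexivity. Qed.

Section BinaryTreeOfLines.
Local Open Scope Q_scope.

Variables p L k : Q.
Hypothesis p_ge0 : 0 <= p.
Hypothesis L_gt0 : 0 < L.
Hypothesis k_gt0 : 0 < k.
Hypothesis k_small : k * (7 * (2 * (p + L) + 1)) <= 1.

Fixpoint radius (n : nat) : Q :=
  match n with O => L * (1 # 2) | S n => radius n * (1 # 4) end.

Fixpoint weight (n : nat) : Q :=
  match n with O => k | S n => k * weight n * radius n end.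

Definition child (n : nat) (c : Q) (b : bool) : Q :=
  if b then c + radius n * (1 # 2) else c - radius n * (1 # 2).

Definition step_slope (n : nat) (b : bool) : Q :=
  if b then weight n else 2 * weight n.

Definition step_intercept (n : nat) (c : Q) (b : bool) : Q :=
  if b then weight n * (1 + c) else weight n.

Fixpoint slope (n : nat) (c : Q) (w : word) : Q :=
  match w with
  | nil => 0
  | b :: z => step_slope n b + slope (S n) (child n c b) z
  end.

Fixpoint intercept (n : nat) (c : Q) (w : word) : Q :=
  match w with
  | nil => 0
  | b :: z => step_intercept n c b + intercept (S n) (child n c b) z
  end.

Fixpoint node (n : nat) (c : Q) (w : word) : Q :=
  match w with
  | nil => c
  | b :: z => node (S n) (child n c b) z
  end.

Definition line_at (n : nat) (c : Q) (w : word) (x : Q) : Q :=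
  slope n c w * x + intercept n c w.

Definition well_placed (n : nat) (c : Q) : Prop :=
  p + (2 # 3) * radius n <= c <= p + L - (2 # 3) * radius n.

Lemma radius_pos (n : nat) : 0 < radius n.
Proof. induction n; simpl; lra. Qed.

Lemma radius_le (n : nat) : radius n <= L * (1 # 2).
Proof. induction n; simpl; [lra|]. pose proof (radius_pos n); lra. Qed.

Lemma weight_pos (n : nat) : 0 < weight n.
Proof.
  induction n; simpl; [lra|].
  pose proof (radius_pos n); apply Qmult_lt_0_compat; [nra|lra].
Qed.

Lemma weight_S_le (n : nat) : weight (S n) <= weight n * (1 # 2).
Proof.
  simpl. pose proof (radius_le n); pose proof (radius_pos n); pose proof (weight_pos n).
  assert (k * radius n <= 1 # 2) by nra.
  nra.
Qed.

Lemma well_placed_child (n : nat) (c : Q) (b : bool) :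
  well_placed n c -> well_placed (S n) (child n c b).
Proof.
  unfold well_placed, child; simpl; pose proof (radius_pos n).
  destruct b; lra.
Qed.

Lemma node_near (n : nat) (c : Q) (w : word) :
  c - (2 # 3) * radius n <= node n c w <= c + (2 # 3) * radius n.
Proof.
  revert n c; induction w as [|b z IH]; intros n c; simpl.
  - pose proof (radius_pos n); lra.
  - specialize (IH (S n) (child n c b)); simpl in IH; unfold child in *.
    pose proof (radius_pos n); destruct b; lra.
Qed.

Lemma node_mem (n : nat) (c : Q) (w : word) :
  well_placed n c -> p <= node n c w <= p + L.
Proof. unfold well_placed; pose proof (node_near n c w); lra. Qed.

Lemma slope_intercept_nonneg (n : nat) (c : Q) (w : word) :
  well_placed n c -> 0 <= slope n c w /\ 0 <= intercept n c w.
Proof.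
  revert n c; induction w as [|b z IH]; intros n c Hc; simpl; [lra|].
  destruct (IH (S n) (child n c b) (well_placed_child n c b Hc)).
  pose proof (weight_pos n); pose proof (radius_pos n).
  unfold well_placed, step_slope, step_intercept in *; destruct b; split; nra.
Qed.

Lemma slope_intercept_pos_cons (n : nat) (c : Q) (b : bool) (z : word) :
  well_placed n c -> 0 < slope n c (b :: z) /\ 0 < intercept n c (b :: z).
Proof.
  intros Hc; simpl.
  destruct (slope_intercept_nonneg (S n) (child n c b) z (well_placed_child n c b Hc)).
  pose proof (weight_pos n); pose proof (radius_pos n).
  unfold well_placed, step_slope, step_intercept in *; destruct b; split; nra.
Qed.

(* Each line added at depth [m] is at most [(2(p+L)+1) weight m] on [0, p+L],
   and the weights at least halve from one depth to the next. *)
Lemma line_at_le (n : nat) (c : Q) (w : word) (x : Q) :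
  well_placed n c -> 0 <= x <= p + L ->
  line_at n c w x <= 2 * (2 * (p + L) + 1) * weight n.
Proof.
  unfold line_at; revert n c; induction w as [|b z IH]; intros n c Hc Hx; simpl.
  - pose proof (weight_pos n); nra.
  - specialize (IH (S n) (child n c b) (well_placed_child n c b Hc) Hx).
    pose proof (weight_S_le n); pose proof (weight_pos n); pose proof (radius_pos n).
    unfold well_placed, step_slope, step_intercept in *; destruct b; nra.
Qed.

Lemma slope_intercept_lt_app_cons (n : nat) (c : Q) (w : word) (b : bool) (z : word) :
  well_placed n c ->
  slope n c w < slope n c (w ++ b :: z) /\ intercept n c w < intercept n c (w ++ b :: z).
Proof.
  revert n c; induction w as [|a w IH]; intros n c Hc.
  - exact (slope_intercept_pos_cons n c b z Hc).
  - destruct (IH (S n) (child n c a) (well_placed_child n c a Hc)); simpl; lra.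
Qed.

(* At the divergence node the two added lines differ by [weight n * |x - c|],
   which is at least [weight n * radius n / 3], while the tail after the
   divergence contributes at most [2/7 weight n * radius n]. *)
Lemma line_at_lt_diverge_here (n : nat) (c : Q) (b : bool) (z1 z2 : word) :
  well_placed n c ->
  line_at n c (b :: z1) (node n c (b :: z1)) < line_at n c (negb b :: z2) (node n c (b :: z1)).
Proof.
  intros Hc; unfold line_at; simpl.
  pose proof (well_placed_child n c b Hc) as Hb.
  pose proof (well_placed_child n c (negb b) Hc) as Hnb.
  pose proof (node_near (S n) (child n c b) z1) as Hnear; simpl in Hnear.
  pose proof (node_mem _ _ z1 Hb) as Hx.
  set (x := node (S n) (child n c b) z1) in *.
  pose proof (line_at_le _ _ z1 x Hb ltac:(lra)) as Htail; unfold line_at in Htail; simpl in Htail.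
  destruct (slope_intercept_nonneg _ _ z2 Hnb) as [Hs2 Hi2].
  assert (Hs2x : 0 <= slope (S n) (child n c (negb b)) z2 * x)
    by (apply Qmult_le_0_compat; lra).
  pose proof (weight_pos n); pose proof (radius_pos n).
  assert (Her : 0 < weight n * radius n) by (apply Qmult_lt_0_compat; lra).
  assert (Hsep : weight n * (radius n * (1 # 3)) <=
                 weight n * (if b then x - c else c - x)).
  { apply Qmult_le_l; [lra|]; unfold child in Hnear; destruct b; lra. }
  assert (Hsmall : 2 * (2 * (p + L) + 1) * (k * weight n * radius n)
                   <= weight n * radius n * (2 # 7)) by nra.
  unfold child, step_slope, step_intercept in *; destruct b; cbn [negb] in *; lra.
Qed.

Lemma line_at_lt_diverge (n : nat) (c : Q) (u : word) (b : bool) (z1 z2 : word) :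
  well_placed n c ->
  line_at n c (u ++ b :: z1) (node n c (u ++ b :: z1))
  < line_at n c (u ++ negb b :: z2) (node n c (u ++ b :: z1)).
Proof.
  revert n c; induction u as [|a u IH]; intros n c Hc.
  - exact (line_at_lt_diverge_here n c b z1 z2 Hc).
  - specialize (IH (S n) (child n c a) (well_placed_child n c a Hc)).
    unfold line_at in *; simpl in *; lra.
Qed.

Lemma line_at_lt_of_not_leW (n : nat) (c : Q) (v w : word) :
  well_placed n c -> ~ leW v w ->
  line_at n c v (node n c v) < line_at n c w (node n c v).
Proof.
  intros Hc Hvw.
  destruct (not_leW_cases v w Hvw) as [[b [z ->]]|[u [b [z1 [z2 [-> ->]]]]]].
  - destruct (slope_intercept_lt_app_cons n c v b z Hc).
    pose proof (node_mem n c v Hc); unfold line_at; nra.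
  - apply line_at_lt_diverge; exact Hc.
Qed.

Definition root : Q := p + L * (1 # 2).

Lemma well_placed_root : well_placed 0 root.
Proof. unfold well_placed, root; simpl; lra. Qed.

Lemma slope_intercept_root_lt_one (w : word) :
  1 <= p + L -> slope 0 root w < 1 /\ intercept 0 root w < 1.
Proof.
  intros H1.
  pose proof (line_at_le 0 root w 1 well_placed_root ltac:(lra)) as Hle.
  destruct (slope_intercept_nonneg 0 root w well_placed_root).
  unfold line_at in Hle; simpl in Hle; split; lra.
Qed.

End BinaryTreeOfLines.

Theorem lemma25 (s t : R) (hs : 1 <= s) (hst : s < t) :
  exists (a b : word -> Q) (r : word -> R),
    (forall w : word, (2 < a w)%Q /\ (2 < b w)%Q /\ s < r w < t) /\
    (forall v w : word, leW v w -> v <> w ->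
       (a v < a w)%Q /\ (b v < b w)%Q) /\
    (forall v w : word, ~ leW v w ->
       linmap (a v) (b v) (r v) > linmap (a w) (b w) (r v)).
Proof.
  destruct (Q_dense_R s t hst) as [p [Hsp Hpt]].
  destruct (Q_dense_R (Q2R p) t Hpt) as [q [Hpq Hqt]].
  set (L := (q - p)%Q).
  set (k := (/ (7 * (2 * (p + L) + 1)))%Q).
  assert (Hp1 : (1 <= p)%Q) by (apply Rle_Qle; unfold Q2R at 1; simpl; Lra.lra).
  assert (Hp : (0 <= p)%Q) by lra.
  assert (HL : (0 < L)%Q) by (apply Rlt_Qlt in Hpq; unfold L; lra).
  assert (Hk : (0 < k)%Q) by (apply Qinv_lt_0_compat; lra).
  assert (Hk7 : (k * (7 * (2 * (p + L) + 1)) <= 1)%Q).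
  { unfold k; rewrite Qmult_comm, Qmult_inv_r; [lra|]. intros H; lra. }
  pose proof (well_placed_root p L HL) as Hroot.
  exists (fun w => (3 - slope L k 0 (root p L) w)%Q),
         (fun w => (3 - intercept L k 0 (root p L) w)%Q),
         (fun w => Q2R (node L 0 (root p L) w)).
  split; [|split].
  - intros w.
    destruct (slope_intercept_root_lt_one p L k Hp HL Hk Hk7 w ltac:(lra)).
    destruct (node_mem p L HL 0 (root p L) w Hroot) as [Hlo Hhi].
    apply Qle_Rle in Hlo, Hhi.
    rewrite (Qeq_eqR (p + L) q) in Hhi by (unfold L; ring).
    repeat split; [lra | lra | Lra.lra | Lra.lra].
  - intros v w [[|b z] ->] Hne.
    + rewrite app_nil_r in Hne; congruence.
    + destruct (slope_intercept_lt_app_cons p L k Hp HL Hk 0 (root p L) w b z Hroot).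
      split; lra.
  - intros v w Hvw.
    rewrite !linmap_Q2R; apply Qlt_Rlt.
    pose proof (line_at_lt_of_not_leW p L k Hp HL Hk Hk7 0 (root p L) v w Hroot Hvw).
    unfold line_at in *; lra.
Qed.
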